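(* Let $A$ be a real $2\times 2$ matrix and $B$ a real $1\times 2$ matrix, and let $\mathrm{NT}=\{\vec{x}\in\mathbb{R}^2 : BA^k\vec{x}>0 \text{ for all integers } k\ge 0\}$. Suppose $A$ has a positive eigenvalue $\lambda_1$ and a negative eigenvalue $\lambda_2$ with $\lambda_1\ge|\lambda_2|$, with eigenvectors $\vec{\beta}_1,\vec{\beta}_2$ respectively, such that $B\vec{\beta}_1>0$ and $B\vec{\beta}_2>0$. Let $\vec{\alpha}\in\mathbb{R}^2$ satisfy $B\vec{\alpha}=0$ and $BA\vec{\alpha}>0$, and let $\vec{\alpha}_{-1}=A^{-1}\vec{\alpha}$. Then $\mathrm{NT}=\{k_1\vec{\alpha}+k_2\vec{\alpha}_{-1}: k_1>0,\ k_2>0\}$.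
   Context: $\mathrm{NT}$ is the non-termination set of the loop ''while $(B\vec{x}>0)$ $\{\vec{x}:=A\vec{x}\}$''. *)

From HB Require Import structures.
From mathcomp Require Import all_boot all_order all_algebra.
Set Implicit Arguments. Unset Strict Implicit. Unset Printing Implicit Defensive.
Import Order.TTheory GRing.Theory Num.Theory.
Local Open Scope ring_scope.

Definition scal1 (R : nzRingType) (M : 'M[R]_1) : R := M 0 0.

(* Non-termination set of  while (B x > 0) { x := A x }:
   NT = { x | B A^k x > 0 for all k >= 0 }. *)
Definition NT (R : realFieldType) (A : 'M[R]_2) (B : 'M[R]_(1,2)) (x : 'cV[R]_2) : Prop :=
  forall k : nat, 0 < scal1 (B *m (A ^+ k *m x)).

Definition is_eigvec (R : realFieldType) (A : 'M[R]_2) (lam : R) (beta : 'cV[R]_2) : Prop :=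
  beta != 0 /\ A *m beta = lam *: beta.

From HB Require Import structures.
From mathcomp Require Import all_boot all_order all_algebra.
From mathcomp Require Import ring lra.
Set Implicit Arguments. Unset Strict Implicit. Unset Printing Implicit Defensive.
Import Order.TTheory GRing.Theory Num.Theory.
Local Open Scope ring_scope.

(* In the eigenbasis, obs k x = u lam1^k + v lam2^k,
   and such a two-term power sum is positive for every k as soon as it is
   positive for k = 0 and k = 1, because the dominant positive ratio lam1
   controls the alternating term.  Hence NT is the open region
   { obs 0 x > 0, obs 1 x > 0 } bounded by two lines through the origin.
   alpha lies on the first line and points into the region, and
   gamma = A^-1 alpha lies on the second one and points into the region too
   (power_sum_back); since x |-> (obs 0 x, obs 1 x) is injective, the region
   is exactly the open cone spanned by alpha and gamma. *)

Section PowerSums.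
Variables (R : realFieldType) (p q : R).
Hypotheses (p_gt0 : 0 < p) (q_lt0 : q < 0) (q_le_p : `|q| <= p).

(* One period of the sign analysis: with L = p^(2j) and N = q^(2j), the
   power sum is positive at the indices 2j and 2j+1. *)
Lemma power_sum_step (u v L N : R) : 0 < N -> N <= L ->
  0 < u + v -> 0 < u * p + v * q ->
  0 < u * L + v * N /\ 0 < u * p * L + v * q * N.
Proof.
move=> N_gt0 N_le_L s0 s1.
have L_gt0 : 0 < L := lt_le_trans N_gt0 N_le_L.
have [v_ge0|v_lt0] := lerP 0 v.
  have vq_le0 : v * q <= 0 := mulr_ge0_le0 v_ge0 (ltW q_lt0).
  have u_gt0 : 0 < u by rewrite -(pmulr_lgt0 _ p_gt0); lra.
  have uN_le_uL : u * N <= u * L by rewrite ler_pM2l.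
  have vqL_le_vqN : v * q * L <= v * q * N by rewrite ler_wnM2l.
  have := mulr_gt0 s0 N_gt0; have := mulr_gt0 s1 L_gt0.
  rewrite !mulrDl => sL sN; split; lra.
have vq_gt0 : 0 < v * q by rewrite nmulr_rgt0.
have u_gt0 : 0 < u by lra.
have vL_le_vN : v * L <= v * N := ler_wnM2l (ltW v_lt0) N_le_L.
have upN_le_upL : u * p * N <= u * p * L by rewrite ler_pM2l ?mulr_gt0.
have := mulr_gt0 s0 L_gt0; have := mulr_gt0 s1 N_gt0.
rewrite !mulrDl => sN sL; split; lra.
Qed.

Lemma power_sum_pos (u v : R) :
  (forall k, 0 < u * p ^+ k + v * q ^+ k) <-> 0 < u + v /\ 0 < u * p + v * q.
Proof.
split=> [pos|[s0 s1] k].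
  by split; [have := pos 0%N | have := pos 1%N]; rewrite ?expr0 ?expr1 ?mulr1.
have q2_le_p2 : q ^+ 2 <= p ^+ 2.
  have opp_q_le_p : - q <= p by rewrite -ltr0_norm.
  by rewrite -sqrrN lerXn2r // nnegrE ltW // oppr_gt0.
have N_gt0 : 0 < (q ^+ 2) ^+ k./2 by rewrite exprn_gt0 // -sqrrN exprn_gt0 // oppr_gt0.
have N_le_L : (q ^+ 2) ^+ k./2 <= (p ^+ 2) ^+ k./2.
  by rewrite lerXn2r ?nnegrE ?sqr_ge0.
have [pos_even pos_odd] := power_sum_step N_gt0 N_le_L s0 s1.
rewrite -(odd_double_half k) -mul2n !(exprD _ (odd k)) !exprM.
by case: (odd k); rewrite ?expr1 ?expr0 ?mul1r // !mulrA.
Qed.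

(* A two-term power sum that vanishes at index 1 and is positive at index 2
   is positive at index 0: the negative ratio q makes the sign alternate. *)
Lemma power_sum_back (u v : R) :
  u * p + v * q = 0 -> 0 < u * p ^+ 2 + v * q ^+ 2 -> 0 < u + v.
Proof.
move=> s1 s2; have vq : v * q = - (u * p) by lra.
have : 0 < u * (p * (p - q)).
  by move: s2; rewrite expr2 (expr2 q) (mulrA v) vq; congr (0 < _); ring.
rewrite pmulr_lgt0 ?mulr_gt0 ?subr_gt0 ?(lt_trans q_lt0) // => u_gt0.
have -> : u + v = (u * (q - p)) / q by rewrite mulrBr -vq; field; rewrite lt_eqF.
by rewrite nmulr_rgt0 ?invr_lt0 // pmulr_rlt0 // subr_lt0 (lt_trans q_lt0).
Qed.
End PowerSums.

Section Cross2.
Variable R : comNzRingType.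

Lemma cV2P (v w : 'cV[R]_2) : v 0 0 = w 0 0 -> v 1 0 = w 1 0 -> v = w.
Proof.
move=> e0 e1; apply/matrixP => i j; rewrite (ord1 j).
case: i => [[|[|//]]] lt_i.
  by rewrite (_ : Ordinal lt_i = 0) //; apply/val_inj.
by rewrite (_ : Ordinal lt_i = 1) //; apply/val_inj.
Qed.

Lemma sum_ord2 (F : 'I_2 -> R) : \sum_(i < 2) F i = F 0 + F 1.
Proof. by rewrite big_ord_recl big_ord1; congr (_ + F _); apply/val_inj. Qed.

Lemma mulmx_cV2E (A : 'M[R]_2) (v : 'cV[R]_2) i :
  (A *m v) i 0 = A i 0 * v 0 0 + A i 1 * v 1 0.
Proof. by rewrite mxE sum_ord2. Qed.

Lemma det_mx2 (A : 'M[R]_2) : \det A = A 0 0 * A 1 1 - A 0 1 * A 1 0.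
Proof.
rewrite (expand_det_row _ 0) sum_ord2 /cofactor !det_mx11 !mxE /=.
have -> : lift (0 : 'I_2) (0 : 'I_1) = 1 by apply/val_inj.
have -> : lift (1 : 'I_2) (0 : 'I_1) = 0 by apply/val_inj.
by rewrite expr0 expr1; ring.
Qed.

Definition cross2 (v w : 'cV[R]_2) : R := v 0 0 * w 1 0 - v 1 0 * w 0 0.

Lemma cross2_mulmx (A : 'M[R]_2) (v w : 'cV[R]_2) :
  cross2 (A *m v) (A *m w) = \det A * cross2 v w.
Proof. by rewrite /cross2 !mulmx_cV2E det_mx2; ring. Qed.

Lemma cross2_cramer (v w x : 'cV[R]_2) :
  cross2 v w *: x = cross2 x w *: v + cross2 v x *: w.
Proof. by apply: cV2P; rewrite !mxE /cross2; ring. Qed.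
End Cross2.

Section Eigenvectors.
Variable R : fieldType.

Lemma cross2_span (v w x : 'cV[R]_2) : cross2 v w != 0 ->
  exists c1 c2 : R, x = c1 *: v + c2 *: w.
Proof.
move=> vw_neq0; exists (cross2 x w / cross2 v w), (cross2 v x / cross2 v w).
by rewrite -!(mulrC (cross2 v w)^-1) -!scalerA -scalerDr -cross2_cramer scalerA mulVf ?scale1r.
Qed.

Lemma cross2_unitmx (A : 'M[R]_2) (v w : 'cV[R]_2) :
  cross2 (A *m v) (A *m w) != 0 -> A \in unitmx.
Proof. by rewrite cross2_mulmx unitmxE unitfE mulf_eq0 negb_or => /andP[]. Qed.

Lemma eigvec_pow (A : 'M[R]_2) (lam : R) (beta : 'cV[R]_2) k :
  A *m beta = lam *: beta -> A ^+ k *m beta = lam ^+ k *: beta.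
Proof.
move=> eig; elim: k => [|k IHk]; first by rewrite expr0 mul1mx scale1r.
by rewrite exprS -mulmxE -mulmxA IHk -scalemxAr eig scalerA exprS mulrC.
Qed.

Lemma eigvec_cross2_neq0 (A : 'M[R]_2) (lam1 lam2 : R) (beta1 beta2 : 'cV[R]_2) :
  beta1 != 0 -> beta2 != 0 -> A *m beta1 = lam1 *: beta1 ->
  A *m beta2 = lam2 *: beta2 -> lam1 != lam2 -> cross2 beta1 beta2 != 0.
Proof.
move=> nz1 nz2 eig1 eig2 lam12; apply: contra nz2 => /eqP dep.
have orth x : cross2 x beta2 = 0.
  set c1 := cross2 x beta2; set c2 := cross2 beta1 x.
  have comb0 : c1 *: beta1 + c2 *: beta2 = 0 by rewrite -cross2_cramer dep scale0r.
  have : (c1 * (lam1 - lam2)) *: beta1 = A *m (c1 *: beta1 + c2 *: beta2)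
      - lam2 *: (c1 *: beta1 + c2 *: beta2).
    by rewrite mulmxDr -!scalemxAr eig1 eig2; apply: cV2P; rewrite !mxE; ring.
  rewrite comb0 mulmx0 scaler0 subr0 => /eqP.
  by rewrite scaler_eq0 mulf_eq0 (subr_eq0 lam1) (negbTE lam12) (negbTE nz1) !orbF => /eqP.
have := orth (delta_mx 0 0); have := orth (delta_mx 1 0).
rewrite /cross2 !mxE /= => e1 e0.
apply/eqP; apply: cV2P; rewrite mxE.
  by move/eqP: e1; rewrite mul0r mul1r sub0r oppr_eq0 => /eqP.
by move: e0; rewrite mul0r mul1r subr0.
Qed.

Lemma eigvec_unitmx (A : 'M[R]_2) (lam1 lam2 : R) (beta1 beta2 : 'cV[R]_2) :
  beta1 != 0 -> beta2 != 0 -> A *m beta1 = lam1 *: beta1 ->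
  A *m beta2 = lam2 *: beta2 -> lam1 != lam2 -> lam1 != 0 -> lam2 != 0 ->
  A \in unitmx.
Proof.
move=> nz1 nz2 eig1 eig2 lam12 lam1_neq0 lam2_neq0.
apply: (@cross2_unitmx A beta1 beta2); rewrite eig1 eig2.
have -> : cross2 (lam1 *: beta1) (lam2 *: beta2) = lam1 * lam2 * cross2 beta1 beta2.
  by rewrite /cross2 !mxE; ring.
by rewrite !mulf_neq0 // (eigvec_cross2_neq0 nz1 nz2 eig1 eig2 lam12).
Qed.
End Eigenvectors.

Section Observations.
Variables (R : realFieldType) (A : 'M[R]_2) (B : 'M[R]_(1,2)).

Definition obs (k : nat) (x : 'cV[R]_2) : R := scal1 (B *m (A ^+ k *m x)).

Lemma obs0 x : obs 0 x = scal1 (B *m x).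
Proof. by rewrite /obs expr0 mul1mx. Qed.

Lemma obsS k x : obs k.+1 x = obs k (A *m x).
Proof. by rewrite /obs exprSr -mulmxE -mulmxA. Qed.

Lemma obs_comb k (a b : R) x y : obs k (a *: x + b *: y) = a * obs k x + b * obs k y.
Proof. by rewrite /obs /scal1 !mulmxDr -!scalemxAr !mxE. Qed.

Lemma obsB k x y : obs k (x - y) = obs k x - obs k y.
Proof. by rewrite /obs /scal1 !mulmxBr !mxE. Qed.

Lemma obs_eigvec k (lam : R) (beta : 'cV[R]_2) :
  A *m beta = lam *: beta -> obs k beta = lam ^+ k * obs 0 beta.
Proof. by move=> eig; rewrite obs0 /obs (eigvec_pow _ eig) -scalemxAr /scal1 mxE. Qed.

Variables (lam1 lam2 : R) (beta1 beta2 : 'cV[R]_2).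
Hypotheses (eig1 : is_eigvec A lam1 beta1) (eig2 : is_eigvec A lam2 beta2).
Hypotheses (lam1_gt0 : 0 < lam1) (lam2_lt0 : lam2 < 0) (lam2_le_lam1 : `|lam2| <= lam1).

Lemma eigval_neq : lam1 != lam2.
Proof. by rewrite gt_eqF // (lt_trans lam2_lt0). Qed.

Lemma eigen_coords x : exists c1 c2 : R, x = c1 *: beta1 + c2 *: beta2.
Proof.
apply: cross2_span; have [nz1 e1] := eig1; have [nz2 e2] := eig2.
exact: eigvec_cross2_neq0 nz1 nz2 e1 e2 eigval_neq.
Qed.

Lemma obs_eigen_comb k (c1 c2 : R) : obs k (c1 *: beta1 + c2 *: beta2)
  = c1 * obs 0 beta1 * lam1 ^+ k + c2 * obs 0 beta2 * lam2 ^+ k.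
Proof. by rewrite obs_comb (obs_eigvec _ eig1.2) (obs_eigvec _ eig2.2); ring. Qed.

Lemma NT_iff_obs01 x : NT A B x <-> 0 < obs 0 x /\ 0 < obs 1 x.
Proof.
have [c1 [c2 ->]] := eigen_coords x.
rewrite !obs_eigen_comb expr0 expr1 !mulr1.
apply: iff_trans (power_sum_pos lam1_gt0 lam2_lt0 lam2_le_lam1 _ _).
by split=> pos k; have := pos k; rewrite -/(obs k _) obs_eigen_comb.
Qed.

Lemma obs_back_pos x : obs 1 x = 0 -> 0 < obs 2 x -> 0 < obs 0 x.
Proof.
have [c1 [c2 ->]] := eigen_coords x.
rewrite !obs_eigen_comb expr0 expr1 !mulr1; exact: power_sum_back.
Qed.

Hypotheses (Bbeta1_neq0 : obs 0 beta1 != 0) (Bbeta2_neq0 : obs 0 beta2 != 0).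

Lemma obs01_kernel x : obs 0 x = 0 -> obs 1 x = 0 -> x = 0.
Proof.
have [c1 [c2 ->]] := eigen_coords x.
rewrite !obs_eigen_comb expr0 expr1 !mulr1.
set u := c1 * obs 0 beta1; set v := c2 * obs 0 beta2 => o0 o1.
have /eqP : u * (lam1 - lam2) = 0 by rewrite mulrBr; nra.
rewrite mulf_eq0 subr_eq0 (negbTE eigval_neq) orbF mulf_eq0 (negbTE Bbeta1_neq0) orbF.
move=> /eqP c1_0; move: o0; rewrite /u c1_0 mul0r add0r => /eqP.
by rewrite mulf_eq0 (negbTE Bbeta2_neq0) orbF => /eqP ->; rewrite !scale0r addr0.
Qed.

Lemma obs01_inj x y : obs 0 x = obs 0 y -> obs 1 x = obs 1 y -> x = y.
Proof.
move=> e0 e1; apply/eqP; rewrite -subr_eq0; apply/eqP.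
by apply: obs01_kernel; rewrite obsB ?e0 ?e1 subrr.
Qed.

Lemma obs01_pos_cone (alpha gamma x : 'cV[R]_2) :
  obs 0 alpha = 0 -> 0 < obs 1 alpha -> obs 1 gamma = 0 -> 0 < obs 0 gamma ->
  (0 < obs 0 x /\ 0 < obs 1 x) <->
  exists k1 k2 : R, 0 < k1 /\ 0 < k2 /\ x = k1 *: alpha + k2 *: gamma.
Proof.
move=> a0 a1 g1 g0; split=> [[x0 x1] | [k1 [k2 [k1_gt0 [k2_gt0 ->]]]]].
  exists (obs 1 x / obs 1 alpha), (obs 0 x / obs 0 gamma).
  split; first exact: divr_gt0.
  split; first exact: divr_gt0.
  by apply: obs01_inj; rewrite obs_comb ?a0 ?g1 mulr0 ?addr0 ?add0r divfK // gt_eqF.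
by rewrite !obs_comb a0 g1 !mulr0 addr0 add0r !mulr_gt0.
Qed.
End Observations.

Theorem lemma9 (R : realFieldType) (A : 'M[R]_2) (B : 'M[R]_(1,2))
  (lam1 lam2 : R) (beta1 beta2 alpha : 'cV[R]_2)
  (hl1 : 0 < lam1) (hl2 : lam2 < 0) (hl12 : `|lam2| <= lam1)
  (hb1 : is_eigvec A lam1 beta1) (hb2 : is_eigvec A lam2 beta2)
  (hBb1 : 0 < scal1 (B *m beta1)) (hBb2 : 0 < scal1 (B *m beta2))
  (hBa : scal1 (B *m alpha) = 0) (hBAa : 0 < scal1 (B *m (A *m alpha))) :
  forall x : 'cV[R]_2,
    NT A B x <->
    exists k1 k2 : R, 0 < k1 /\ 0 < k2 /\
      x = k1 *: alpha + k2 *: (invmx A *m alpha).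
Proof.
have [[nz1 eig1] [nz2 eig2]] := (hb1, hb2).
have A_unit : A \in unitmx.
  exact: eigvec_unitmx nz1 nz2 eig1 eig2 (eigval_neq hl1 hl2) (lt0r_neq0 hl1) (ltr0_neq0 hl2).
set gamma := invmx A *m alpha.
have A_gamma : A *m gamma = alpha by rewrite mulKVmx.
have alpha0 : obs A B 0 alpha = 0 by rewrite obs0.
have alpha1 : 0 < obs A B 1 alpha by rewrite obsS obs0.
have gamma1 : obs A B 1 gamma = 0 by rewrite obsS A_gamma.
have gamma0 : 0 < obs A B 0 gamma.
  by apply: (obs_back_pos hb1 hb2 hl1 hl2); rewrite obsS A_gamma.
move=> x; apply: iff_trans (NT_iff_obs01 B hb1 hb2 hl1 hl2 hl12 x) _.
have Bbeta1 : obs A B 0 beta1 != 0 by rewrite obs0 gt_eqF.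
have Bbeta2 : obs A B 0 beta2 != 0 by rewrite obs0 gt_eqF.
exact (obs01_pos_cone hb1 hb2 hl1 hl2 Bbeta1 Bbeta2 x alpha0 alpha1 gamma1 gamma0).
Qed.
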